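(* Let $n\ge1$, $D\ge1$, and let $X_n=\{\mathbf{x}^0,\ldots,\mathbf{x}^{n-1}\}\subseteq\{0,1\}^D$ consist of $n$ pairwise distinct vectors, indexed so that $\mathbf{a}\cdot\mathbf{x}^0<\mathbf{a}\cdot\mathbf{x}^1<\cdots<\mathbf{a}\cdot\mathbf{x}^{n-1}$ for some $\mathbf{a}\in\mathbb{Z}^D$. Let $r=\lceil\sqrt n\rceil$. Then there is a three-layer Boolean threshold network with $D$ input nodes, $r+D$ hidden nodes and $2r$ output nodes that maps each $\mathbf{x}^i$ to the concatenation $(\mathbf{h}^k[r],\mathbf{h}^\ell[r])\in\{0,1\}^{2r}$, where $k,\ell$ are the integers with $i=kr+\ell$ and $0\le\ell<r$.
   Context: For integers $0\le i<s$, the step vector $\mathbf{h}^i[s]\in\{0,1\}^s$ has $\mathbf{h}^i[s]_j=1$ for $0\le j\le i$ and $0$ for $i<j<s$. A Boolean threshold function is a map $\{0,1\}^h\to\{0,1\}$, $\mathbf{u}\mapsto[\mathbf{w}\cdot\mathbf{u}\ge\theta]$ (value $1$ iff $\mathbf{w}\cdot\mathbf{u}\ge\theta$) with $\mathbf{w}\in\mathbb{Z}^h,\theta\in\mathbb{Z}$. An $L$-layer Boolean threshold network has layers $1,\ldots,L$; layer $1$ is the input; each node of layer $t+1$ computes a Boolean threshold function of the values of layer $t$; the network computes the map input $\mapsto$ values of layer $L$; layers $2,\ldots,L-1$ are hidden. *)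

From mathcomp Require Import all_boot all_order all_algebra.
Set Implicit Arguments. Unset Strict Implicit. Unset Printing Implicit Defensive.
Import Order.TTheory GRing.Theory Num.Theory.
Local Open Scope ring_scope.

Definition dotb (h : nat) (w : 'I_h -> int) (u : 'I_h -> bool) : int :=
  \sum_(j < h) w j * (u j)%:R.

Definition threshold (h : nat) (w : 'I_h -> int) (theta : int)
  (u : 'I_h -> bool) : bool := theta <= dotb w u.

Definition net3 (D H O : nat) (W1 : 'I_H -> 'I_D -> int) (t1 : 'I_H -> int)
  (W2 : 'I_O -> 'I_H -> int) (t2 : 'I_O -> int) (x : 'I_D -> bool) : 'I_O -> bool :=
  fun o => threshold (W2 o) (t2 o) (fun j => threshold (W1 j) (t1 j) x).

(* Step vector h^i[s]: entry j is 1 iff j <= i. *)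
Definition stepv (s i : nat) : 'I_s -> bool := fun j => (j <= i)%N.

Definition concatb (m p : nat) (u : 'I_m -> bool) (v : 'I_p -> bool)
  : 'I_(m + p) -> bool :=
  fun o => match split o with inl a => u a | inr b => v b end.

Lemma ceil_sqrt_ex (n : nat) : exists r, (n <= r * r)%N.
Proof. by exists n; case: n => // n; rewrite leq_pmulr. Qed.

Definition ceil_sqrt (n : nat) : nat := ex_minn (ceil_sqrt_ex n).

(* Let v_i := a . x^i, strictly increasing in i, and choose thresholds V m with
   V m <= v_i iff m <= i (V m := v_m for m < n, anything above v_(n-1) otherwise).
   Writing i = q r + l, hidden node k < r fires iff V (k r) <= v_i, i.e. k <= q, so the
   first hidden block is h^q[r]; the other D hidden nodes copy the input.  The first r
   outputs copy h^q[r].  Output l of the second block weights hidden node k by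
   V ((k-1) r + l) - V (k r + l) (and node 0 by 0) and the copied input by a: on h^q[r]
   these weights telescope to V l - V (q r + l), so with threshold V l the output fires
   iff V (q r + l) <= v_i, i.e. l <= i mod r. *)

From mathcomp Require Import all_boot all_order all_algebra.
Set Implicit Arguments. Unset Strict Implicit. Unset Printing Implicit Defensive.
Import Order.TTheory GRing.Theory Num.Theory.
Local Open Scope ring_scope.

Definition unitw (D : nat) (d : 'I_D) : 'I_D -> int := fun d' => (d' == d)%:R.

Definition concatw (m p : nat) (w1 : 'I_m -> int) (w2 : 'I_p -> int)
  : 'I_(m + p) -> int :=
  fun o => match split o with inl a => w1 a | inr b => w2 b end.

Definition diffw (r : nat) (g : nat -> int) : 'I_r -> int :=
  fun k => if val k is k'.+1 then g k' - g k'.+1 else 0.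

Lemma split_lshift (m p : nat) (k : 'I_m) : split (lshift p k) = inl k.
Proof. exact: (unsplitK (inl k)). Qed.

Lemma split_rshift (m p : nat) (k : 'I_p) : split (rshift m k) = inr k.
Proof. exact: (unsplitK (inr k)). Qed.

Lemma concatb_lshift (m p : nat) (u : 'I_m -> bool) (v : 'I_p -> bool) (k : 'I_m) :
  concatb u v (lshift p k) = u k.
Proof. by rewrite /concatb split_lshift. Qed.

Lemma eq_dotb (h : nat) (w : 'I_h -> int) (u v : 'I_h -> bool) :
  u =1 v -> dotb w u = dotb w v.
Proof. by move=> uv; apply: eq_bigr => j _; rewrite uv. Qed.

Lemma eq_threshold (h : nat) (w : 'I_h -> int) (theta : int) (u v : 'I_h -> bool) :
  u =1 v -> threshold w theta u = threshold w theta v.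
Proof. by move=> uv; rewrite /threshold (eq_dotb w uv). Qed.

Lemma dotb_unitw (D : nat) (d : 'I_D) (u : 'I_D -> bool) : dotb (unitw d) u = (u d)%:R.
Proof.
rewrite /dotb (bigD1 d) //= /unitw eqxx mul1r big1 ?addr0 // => j /negbTE ->.
by rewrite mul0r.
Qed.

Lemma threshold_unitw (D : nat) (d : 'I_D) (u : 'I_D -> bool) :
  threshold (unitw d) 1 u = u d.
Proof. by rewrite /threshold dotb_unitw; case: (u d). Qed.

Lemma dotb_concat (m p : nat) (w1 : 'I_m -> int) (w2 : 'I_p -> int)
    (u1 : 'I_m -> bool) (u2 : 'I_p -> bool) :
  dotb (concatw w1 w2) (concatb u1 u2) = dotb w1 u1 + dotb w2 u2.
Proof.
rewrite /dotb big_split_ord /concatw /concatb.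
by congr (_ + _); apply: eq_bigr => k _; rewrite ?split_lshift ?split_rshift.
Qed.

Lemma dotb_diffw_stepv (r q : nat) (g : nat -> int) : (q < r)%N ->
  dotb (diffw g) (@stepv r q) = g 0%N - g q.
Proof.
move=> qr; rewrite /dotb /diffw /stepv.
rewrite -(big_mkord xpredT
  (fun k => (if k is k'.+1 then g k' - g k'.+1 else 0) * (k <= q)%N%:R)).
rewrite (big_cat_nat (n := q.+1)) //= [X in _ + X]big1_seq ?addr0; last first.
  by move=> k /andP[_]; rewrite mem_index_iota => /andP[qk _]; rewrite leqNgt qk mulr0.
rewrite big_nat_recl //= mul0r add0r.
rewrite (@telescope_sumr_eq _ _ _ (fun k => - g k)) ?opprK 1?addrC //.
by move=> k /andP[_ kq]; rewrite kq mulr1 opprK addrC.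
Qed.

Lemma prefix_thresholds (n : nat) (v : 'I_n -> int) :
    (forall i j : 'I_n, (i < j)%N -> v i < v j) ->
  exists V : nat -> int, forall (i : 'I_n) (m : nat), (V m <= v i) = (m <= i)%N.
Proof.
case: n v => [|n] v v_incr; first by exists (fun=> 0) => -[].
have v_mono (i j : 'I_n.+1) : (i <= j)%N -> v i <= v j.
  by rewrite leq_eqVlt => /orP[/eqP/val_inj -> //|/v_incr/ltW].
exists (fun m => if insub m is Some j then v j else v ord_max + 1) => i m.
case: insubP => [j _ <-|]; last first.
  rewrite -leqNgt => nm.
  have -> : (m <= i)%N = false by apply/negbTE; rewrite -ltnNge (leq_trans _ nm).
  apply/negbTE; rewrite -ltNge (@le_lt_trans _ _ (v ord_max)) ?ltrDl //.
  by rewrite v_mono // -ltnS.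
case: (ltngtP j i) => [ji|ij|/val_inj ->]; last by rewrite lexx.
- by rewrite ltW // v_incr.
- by apply/negbTE; rewrite -ltNge v_incr.
Qed.

Section StepEncoding.

Variables (n D r : nat) (x : 'I_n -> 'I_D -> bool) (a : 'I_D -> int) (V : nat -> int).
Hypothesis V_prefix : forall (i : 'I_n) (m : nat), (V m <= dotb a (x i)) = (m <= i)%N.
Hypothesis n_le_rr : (n <= r * r)%N.

Definition hidden_weights (j : 'I_(r + D)) : 'I_D -> int :=
  match split j with inl _ => a | inr d => unitw d end.

Definition hidden_thresholds (j : 'I_(r + D)) : int :=
  match split j with inl k => V (k * r)%N | inr _ => 1 end.

Definition output_weights (o : 'I_(r + r)) : 'I_(r + D) -> int :=
  match split o with
  | inl k => unitw (lshift D k)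
  | inr l => concatw (diffw (fun k => V (k * r + l)%N)) a
  end.

Definition output_thresholds (o : 'I_(r + r)) : int :=
  match split o with inl _ => 1 | inr l => V l end.

Lemma radix_gt0 (i : 'I_n) : (0 < r)%N.
Proof. by case: r n_le_rr => // /(leq_trans (ltn_ord i)). Qed.

Lemma hidden_layerE (i : 'I_n) :
  (fun j => threshold (hidden_weights j) (hidden_thresholds j) (x i))
  =1 concatb (@stepv r (i %/ r)) (x i).
Proof.
move=> j; rewrite /hidden_weights /hidden_thresholds [RHS]/concatb.
case: (split j) => [k|d]; last exact: threshold_unitw.
by rewrite /threshold V_prefix /stepv leq_divRL // (radix_gt0 i).
Qed.

Lemma output_layerE (i : 'I_n) :
  (fun o => threshold (output_weights o) (output_thresholds o)
                      (concatb (@stepv r (i %/ r)) (x i)))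
  =1 concatb (@stepv r (i %/ r)) (@stepv r (i %% r)).
Proof.
move=> o; rewrite /output_weights /output_thresholds [RHS]/concatb.
case: (split o) => [k|l]; first by rewrite threshold_unitw concatb_lshift.
have q_lt_r : (i %/ r < r)%N by rewrite ltn_divLR ?(radix_gt0 i) // (leq_trans _ n_le_rr).
rewrite /threshold dotb_concat dotb_diffw_stepv // mul0n add0n.
rewrite -addrA lerDl addrC subr_ge0 V_prefix /stepv.
by rewrite {2}(divn_eq i r) leq_add2l.
Qed.

Lemma net3_step_encoding (i : 'I_n) :
  net3 hidden_weights hidden_thresholds output_weights output_thresholds (x i)
  =1 concatb (@stepv r (i %/ r)) (@stepv r (i %% r)).
Proof. by move=> o; rewrite /net3 (eq_threshold _ _ (hidden_layerE i)) output_layerE. Qed.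

End StepEncoding.

Theorem theorem12 (n D : nat) (hn : (1 <= n)%N) (hD : (1 <= D)%N)
  (x : 'I_n -> ('I_D -> bool)) (a : 'I_D -> int)
  (hinj : injective x)
  (hord : forall i j : 'I_n, (i < j)%N -> dotb a (x i) < dotb a (x j)) :
  let r := ceil_sqrt n in
  exists (W1 : 'I_(r + D) -> 'I_D -> int) (t1 : 'I_(r + D) -> int)
         (W2 : 'I_(r + r) -> 'I_(r + D) -> int) (t2 : 'I_(r + r) -> int),
    forall i : 'I_n,
      net3 W1 t1 W2 t2 (x i) =1 concatb (@stepv r (i %/ r)%N) (@stepv r (i %% r)%N).
Proof.
(* [hinj] follows from [hord]. *)
move=> r.
have n_le_rr : (n <= r * r)%N by rewrite /r /ceil_sqrt; case: ex_minnP.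
have [V V_prefix] := prefix_thresholds (v := fun i => dotb a (x i)) hord.
by do 4!eexists; apply: net3_step_encoding V_prefix n_le_rr.
Qed.
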